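(* $$\sum_{n\ge0}|\mathfrak S_n(1243,2143,321)|x^n=1+x\frac{1-2x+3x^2}{(1-x)^4},$$ and consequently, for all $n\ge1$, $$|\mathfrak S_n(1243,2143,321)|=\binom{n-1}{0}+\binom{n-1}{1}+2\binom{n-1}{2}+2\binom{n-1}{3}.$$
   Context: $\mathfrak S_n(R)$ is the set of permutations of $\{1,\dots,n\}$ avoiding every pattern in $R$, where $\pi$ avoids $\sigma$ if no subsequence of $\pi$ has the same relative order as $\sigma$. *)

From mathcomp Require Import all_boot all_order all_algebra all_fingroup.
Set Implicit Arguments. Unset Strict Implicit. Unset Printing Implicit Defensive.

(* A pattern is given in one-line notation as a sequence of naturals,
   e.g. [:: 1; 2; 4; 3] for 1243.  A permutation pi of {0,..,n-1}
   (pi : 'S_n) contains the pattern s if there are positions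
   f 0 < f 1 < ... < f (k-1) (k = size s) such that the values
   pi (f 0), ..., pi (f (k-1)) are in the same relative order as s. *)
Definition contains_pat (n : nat) (pi : 'S_n) (s : seq nat) : bool :=
  [exists f : {ffun 'I_(size s) -> 'I_n},
     [forall i : 'I_(size s), forall j : 'I_(size s),
        ((i < j)%N ==> (f i < f j)%N) &&
        (((pi (f i) : nat) < pi (f j))%N == (nth 0 s i < nth 0 s j)%N)]].

Definition avoids_pat (n : nat) (pi : 'S_n) (s : seq nat) : bool :=
  ~~ contains_pat pi s.

Definition Av (n : nat) (R : seq (seq nat)) : {set 'S_n} :=
  [set pi : 'S_n | all (avoids_pat pi) R].

Definition R14 : seq (seq nat) := [:: [:: 1; 2; 4; 3]; [:: 2; 1; 4; 3]; [:: 3; 2; 1]].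

From mathcomp Require Import all_boot all_order all_algebra all_fingroup.
From mathcomp Require Import zify ring.
Import GRing.Theory.
Set Implicit Arguments. Unset Strict Implicit. Unset Printing Implicit Defensive.

(* If the maximum m is the last entry,
   it cannot take part in an occurrence of 1243, 2143 or 321, so these avoiders are the
   avoiders of length m followed by m.  Otherwise let z < m be the last entry: 321 through
   m forces the entries after m to increase (hence to be at most z); 1243/2143 with m z as
   the final "43" leaves at most one entry y < z before m; 321 through z makes the entries
   above z increase; and a 321 ending in 0 forces y = 0 or y to be the first entry.  This
   leaves exactly m + (m-1)^2 explicit permutations, so a(m+1) = a(m) + m + (m-1)^2, which
   yields both the binomial formula and the generating function. *)

Definition avoids321 (s : seq nat) : Prop :=
  forall i j k, i < j -> j < k -> k < size s ->
  ~~ (nth 0 s k < nth 0 s j < nth 0 s i).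

Definition avoids1243_2143 (s : seq nat) : Prop :=
  forall i j k l, i < j -> j < k -> k < l -> l < size s ->
  ~~ [&& nth 0 s i < nth 0 s l, nth 0 s j < nth 0 s l & nth 0 s l < nth 0 s k].

Definition avoidsR14_seq (s : seq nat) : bool :=
  [forall i : 'I_(size s), forall j : 'I_(size s), forall k : 'I_(size s),
     (i < j < k) ==> ~~ (nth 0 s k < nth 0 s j < nth 0 s i)] &&
  [forall i : 'I_(size s), forall j : 'I_(size s), forall k : 'I_(size s),
   forall l : 'I_(size s), [&& i < j, j < k & k < l] ==>
     ~~ [&& nth 0 s i < nth 0 s l, nth 0 s j < nth 0 s l & nth 0 s l < nth 0 s k]].

Lemma avoidsR14_seqP s : reflect (avoids321 s /\ avoids1243_2143 s) (avoidsR14_seq s).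
Proof.
apply: (iffP andP) => [[/forallP h3 /forallP h4] | [h3 h4]]; split.
- move=> i j k ij jk ks; have js := ltn_trans jk ks; have is_ := ltn_trans ij js.
  move: (h3 (Ordinal is_)) => /forallP /(_ (Ordinal js)) /forallP /(_ (Ordinal ks)).
  by rewrite /= ij jk.
- move=> i j k l ij jk kl ls; have ks := ltn_trans kl ls; have js := ltn_trans jk ks.
  have is_ := ltn_trans ij js.
  move: (h4 (Ordinal is_)) => /forallP /(_ (Ordinal js)) /forallP /(_ (Ordinal ks)).
  by move=> /forallP /(_ (Ordinal ls)); rewrite /= ij jk kl.
- apply/forallP => i; apply/forallP => j; apply/forallP => k.
  by apply/implyP => /andP [ij jk]; apply: h3.
- apply/forallP => i; apply/forallP => j; apply/forallP => k; apply/forallP => l.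
  by apply/implyP => /and3P [ij jk kl]; apply: h4.
Qed.

Definition seq_of_perm n (pi : 'S_n) : seq nat := [seq val (pi i) | i <- enum 'I_n].

Lemma size_seq_of_perm n (pi : 'S_n) : size (seq_of_perm pi) = n.
Proof. by rewrite size_map size_enum_ord. Qed.

Lemma nth_seq_of_perm n (pi : 'S_n) (i : 'I_n) : nth 0 (seq_of_perm pi) i = pi i.
Proof. by rewrite (nth_map i) ?size_enum_ord // nth_ord_enum. Qed.

Lemma perm_eq_seq_of_perm n (pi : 'S_n) : perm_eq (seq_of_perm pi) (iota 0 n).
Proof.
apply: uniq_perm; first by rewrite map_inj_uniq ?enum_uniq // => i j /val_inj/perm_inj.
  exact: iota_uniq.
move=> v; rewrite mem_iota /=; apply/mapP/idP => [[i _ ->] | vn]; first exact: ltn_ord.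
by exists (pi^-1%g (Ordinal vn)); rewrite ?mem_enum ?permKV.
Qed.

Lemma uniq_seq_of_perm n (pi : 'S_n) : uniq (seq_of_perm pi).
Proof. by rewrite (perm_uniq (perm_eq_seq_of_perm pi)) iota_uniq. Qed.

Lemma seq_of_perm_inj n : injective (@seq_of_perm n).
Proof.
move=> pi rho e; apply/permP => i; apply: val_inj.
by have := congr1 (nth 0 ^~ i) e; rewrite /= !nth_seq_of_perm.
Qed.

Lemma seq_of_perm_onto n s : perm_eq s (iota 0 n) -> exists pi : 'S_n, seq_of_perm pi = s.
Proof.
move=> s_perm; have s_uniq : uniq s by rewrite (perm_uniq s_perm) iota_uniq.
have s_size : size s = n by rewrite (perm_size s_perm) size_iota.
have s_lt (i : 'I_n) : nth 0 s i < n.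
  have : nth 0 s i \in s by rewrite mem_nth ?s_size.
  by rewrite (perm_mem s_perm) mem_iota.
pose f (i : 'I_n) := Ordinal (s_lt i).
have f_inj : injective f.
  by move=> i j /(congr1 val) /eqP; rewrite /= nth_uniq ?s_size // => /eqP/val_inj.
exists (perm f_inj); apply: (@eq_from_nth _ 0); first by rewrite size_seq_of_perm.
by move=> i; rewrite size_seq_of_perm => ilt; rewrite (nth_seq_of_perm _ (Ordinal ilt)) permE.
Qed.

Lemma card_perm_seq n (P : pred (seq nat)) :
  #|[set pi : 'S_n | P (seq_of_perm pi)]| = count P (permutations (iota 0 n)).
Proof.
rewrite cardsE cardE -deprecated_filter_index_enum size_filter -(count_map _ P).
apply/seq.permP/uniq_perm.
- by rewrite map_inj_uniq ?index_enum_uniq //; apply: seq_of_perm_inj.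
- exact: permutations_uniq.
move=> s; rewrite mem_permutations; apply/mapP/idP => [[pi _ ->] | /seq_of_perm_onto [pi <-]].
  exact: perm_eq_seq_of_perm.
by exists pi; rewrite ?mem_index_enum.
Qed.

Definition occurs (p s : seq nat) : Prop :=
  exists f : nat -> nat, (forall i, i < size p -> f i < size s) /\
    forall i j, i < j < size p ->
      f i < f j /\ (nth 0 s (f i) < nth 0 s (f j)) = (nth 0 p i < nth 0 p j).

Lemma ltn_flip (a b : nat) : a != b -> (a < b) = ~~ (b < a).
Proof. lia. Qed.

(* [contains_pat] also compares pairs i > j; for a pattern with distinct entries these
   comparisons are the negations of the ones for j < i. *)
Lemma contains_pat_occurs n (pi : 'S_n) p :
  uniq p -> contains_pat pi p <-> occurs p (seq_of_perm pi).
Proof.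
move=> p_uniq; split => [/existsP [f /forallP f_occ] | [g [g_lt g_occ]]].
  pose g i := oapp (fun t => val (f t)) 0 (insub i).
  have gE i (ilt : i < size p) : g i = f (Ordinal ilt) by rewrite /g insubT.
  exists g; split => [i ilt | i j /andP [ij jp]].
    by rewrite gE size_seq_of_perm.
  have ip := ltn_trans ij jp.
  move: (f_occ (Ordinal ip)) => /forallP /(_ (Ordinal jp)) /andP [/implyP /(_ ij) fij /eqP].
  by rewrite (gE i ip) (gE j jp) !nth_seq_of_perm.
have g_ltn (t : 'I_(size p)) : g t < n by rewrite -(size_seq_of_perm pi) g_lt.
apply/existsP; exists [ffun t => Ordinal (g_ltn t)]; apply/forallP => i; apply/forallP => j.
rewrite !ffunE /= -!nth_seq_of_perm /=.
case: (ltngtP i j) => [ij | ji | /val_inj ->]; last by rewrite !ltnn.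
  by have [-> ->] := g_occ i j (introT andP (conj ij (ltn_ord j))); rewrite eqxx.
have [gji e] := g_occ j i (introT andP (conj ji (ltn_ord i))).
have s_neq : nth 0 (seq_of_perm pi) (g i) != nth 0 (seq_of_perm pi) (g j).
  by rewrite nth_uniq ?uniq_seq_of_perm ?g_lt // gtn_eqF.
have p_neq : nth 0 p i != nth 0 p j by rewrite nth_uniq // gtn_eqF.
by rewrite /= (ltn_flip s_neq) (ltn_flip p_neq) e.
Qed.

Lemma nth_uniq_neq (s : seq nat) i j :
  uniq s -> i < j -> j < size s -> nth 0 s i != nth 0 s j.
Proof. by move=> s_uniq ij js; rewrite nth_uniq ?ltn_eqF // (ltn_trans ij). Qed.

Lemma avoids321_occurs s : uniq s -> avoids321 s <-> ~ occurs [:: 3; 2; 1] s.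
Proof.
move=> s_uniq; split => [s321 [f [f_lt f_occ]] | no321 i j k ij jk ks].
  have [f01 e01] := f_occ 0 1 isT; have [f12 e12] := f_occ 1 2 isT.
  have f2s := f_lt 2 isT; have f1s := ltn_trans f12 f2s.
  have := nth_uniq_neq s_uniq f01 f1s; have := nth_uniq_neq s_uniq f12 f2s.
  by move: (s321 _ _ _ f01 f12 f2s) e01 e12 => /=; lia.
apply/negP => pat; apply: no321; exists (nth 0 [:: i; j; k]); split.
  by case=> [|[|[|]]] //= ab; lia.
by case=> [|[|[|a]]] [|[|[|b]]] //= ab; split; lia.
Qed.

Lemma avoids1243_2143_occurs s : uniq s ->
  avoids1243_2143 s <-> ~ occurs [:: 1; 2; 4; 3] s /\ ~ occurs [:: 2; 1; 4; 3] s.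
Proof.
move=> s_uniq; split => [sx43 | [no1243 no2143] i j k l ij jk kl ls].
  have no_occ q : [&& size q == 4, nth 0 q 0 < nth 0 q 3, nth 0 q 1 < nth 0 q 3
                    & nth 0 q 3 < nth 0 q 2] -> ~ occurs q s.
    case/and4P=> /eqP q4 q03 q13 q32 [f []]; rewrite q4 => f_lt f_occ.
    have [f01 _] := f_occ 0 1 isT; have [f12 _] := f_occ 1 2 isT.
    have [f23 e23] := f_occ 2 3 isT; have [_ e03] := f_occ 0 3 isT.
    have [_ e13] := f_occ 1 3 isT; have f3s := f_lt 3 isT.
    have := nth_uniq_neq s_uniq f23 f3s; move: (sx43 _ _ _ _ f01 f12 f23 f3s).
    have q23 : (nth 0 q 2 < nth 0 q 3) = false by apply/negbTE; rewrite -leqNgt ltnW.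
    by move: e23; rewrite e03 e13 q03 q13 q23 /= => /negbT; lia.
  by split; apply: no_occ.
apply/negP => /and3P [il jl lk].
have occ q : size q = 4 -> (forall a b, a < b < 4 ->
    (nth 0 s (nth 0 [:: i; j; k; l] a) < nth 0 s (nth 0 [:: i; j; k; l] b))
    = (nth 0 q a < nth 0 q b)) -> occurs q s.
  move=> q4 q_ord; exists (nth 0 [:: i; j; k; l]); rewrite q4; split.
    by case=> [|[|[|[|]]]] //= ab; lia.
  move=> a b ab; split; last exact: q_ord.
  by move: ab; case: a => [|[|[|[|a]]]]; case: b => [|[|[|[|b]]]] //= ab; lia.
have := nth_uniq_neq s_uniq ij (ltn_trans jk (ltn_trans kl ls)).
case: (ltnP (nth 0 s i) (nth 0 s j)) => [sij | sji] sneq.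
  by apply: no1243; apply: occ => // - [|[|[|[|a]]]] [|[|[|[|b]]]] //= ab; lia.
by apply: no2143; apply: occ => // - [|[|[|[|a]]]] [|[|[|[|b]]]] //= ab; lia.
Qed.

Lemma avoidsR14_perm n (pi : 'S_n) : all (avoids_pat pi) R14 = avoidsR14_seq (seq_of_perm pi).
Proof.
have s_uniq := uniq_seq_of_perm pi.
have occ p : occurs p (seq_of_perm pi) -> uniq p -> contains_pat pi p.
  by move=> p_occ /contains_pat_occurs ->.
rewrite /= andbT /avoids_pat; apply/and3P/avoidsR14_seqP.
  case=> /negP no1243 /negP no2143 /negP no321; split.
    by apply/avoids321_occurs => // /occ /(_ isT).
  by apply/avoids1243_2143_occurs => //; split => /occ /(_ isT).
case=> /(avoids321_occurs s_uniq) no321 /(avoids1243_2143_occurs s_uniq) [no1243 no2143].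
by split; apply/negP => /contains_pat_occurs; auto.
Qed.

Lemma card_Av_R14 n : #|Av n R14| = count avoidsR14_seq (permutations (iota 0 n)).
Proof. by rewrite -card_perm_seq; apply: eq_card => pi; rewrite !inE avoidsR14_perm. Qed.

Lemma avoidsR14_seq_rcons_max s x :
  all (fun v => v < x) s -> avoidsR14_seq (rcons s x) = avoidsR14_seq s.
Proof.
move=> /allP s_lt; set n := size s.
have nth_s i : i < n -> nth 0 (rcons s x) i = nth 0 s i by move=> ilt; rewrite nth_rcons ilt.
have nth_x : nth 0 (rcons s x) n = x by rewrite nth_rcons ltnn eqxx.
have lt_x i : i < n -> nth 0 s i < x by move=> ilt; apply/s_lt/mem_nth.
have size_rc : size (rcons s x) = n.+1 by rewrite size_rcons.
apply/avoidsR14_seqP/avoidsR14_seqP => -[h3 h4]; split.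
- move=> i j k ij jk kn; have jn := ltn_trans jk kn; have in_ := ltn_trans ij jn.
  by rewrite -!nth_s //; apply: h3; rewrite // size_rc ltnS ltnW.
- move=> i j k l ij jk kl ln; have kn := ltn_trans kl ln; have jn := ltn_trans jk kn.
  have in_ := ltn_trans ij jn.
  by rewrite -!nth_s //; apply: h4; rewrite // size_rc ltnS ltnW.
- move=> i j k ij jk; rewrite size_rc ltnS leq_eqVlt => /predU1P [kE | kn].
    by rewrite kE in jk *; rewrite nth_x !nth_s ?(ltn_trans ij) //; have := lt_x j jk; lia.
  have jn := ltn_trans jk kn; have in_ := ltn_trans ij jn.
  by rewrite !nth_s //; apply: h3.
- move=> i j k l ij jk kl; rewrite size_rc ltnS leq_eqVlt => /predU1P [lE | ln].
    rewrite lE in kl *; have jn := ltn_trans jk kl; rewrite nth_x !nth_s ?(ltn_trans ij) //.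
    by have := lt_x k kl; lia.
  have kn := ltn_trans kl ln; have jn := ltn_trans jk kn.
  have in_ := ltn_trans ij jn.
  by rewrite !nth_s //; apply: h4.
Qed.

Lemma count_avoiders_max_last m :
  count (fun s => avoidsR14_seq s && (nth 0 s m == m)) (permutations (iota 0 m.+1))
  = count avoidsR14_seq (permutations (iota 0 m)).
Proof.
have iotaS : iota 0 m.+1 = rcons (iota 0 m) m by rewrite -addn1 iotaD cats1.
have max_last : perm_eq [seq s <- permutations (iota 0 m.+1) | nth 0 s m == m]
                        [seq rcons s m | s <- permutations (iota 0 m)].
  apply: uniq_perm; first exact/filter_uniq/permutations_uniq.
    by rewrite map_inj_uniq ?permutations_uniq //; apply: rcons_injl.
  move=> s; rewrite mem_filter mem_permutations iotaS; apply/andP/mapP.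
    case=> /eqP s_m s_perm; have := perm_size s_perm; rewrite !size_rcons size_iota.
    case/lastP: s s_m s_perm => // s x; rewrite size_rcons nth_rcons => s_m s_perm [size_s].
    move: s_m s_perm; rewrite size_s ltnn eqxx => -> s_perm.
    by exists s; rewrite // mem_permutations; rewrite -!cats1 perm_cat2r in s_perm.
  case=> t; rewrite mem_permutations => t_perm ->.
  have size_t : size t = m by rewrite (perm_size t_perm) size_iota.
  by rewrite nth_rcons size_t ltnn !eqxx -!cats1 perm_cat2r.
rewrite -count_filter (seq.permP max_last) count_map.
apply: eq_in_count => s; rewrite mem_permutations => s_perm /=.
by apply: avoidsR14_seq_rcons_max; apply/allP => v; rewrite (perm_mem s_perm) mem_iota.
Qed.

Ltac case_ifs :=
  repeat match goal with |- context [if ?b then _ else _] => let H := fresh in case H: b end.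

Lemma perm_eq_mkseq_iota (f : nat -> nat) n :
  (forall i, i < n -> f i < n) -> (forall i j, i < j -> j < n -> f i != f j) ->
  perm_eq (mkseq f n) (iota 0 n).
Proof.
move=> f_lt f_neq.
have f_uniq : uniq (mkseq f n).
  apply/mkseq_uniqP => i j; rewrite !inE => ilt jlt fij; apply/eqP.
  by case: ltngtP => // [ij | ji]; [move: (f_neq i j ij jlt) | move: (f_neq j i ji ilt)];
    rewrite fij eqxx.
have f_sub : {subset mkseq f n <= iota 0 n}.
  by move=> v /mapP [i]; rewrite !mem_iota /= => ilt ->; apply: f_lt.
have [_ f_eq] := uniq_min_size f_uniq f_sub ltac:(by rewrite size_iota size_mkseq).
exact: uniq_perm f_uniq (iota_uniq 0 n) f_eq.
Qed.

(* Among three positions two have the same colour, and these are in increasing order. *)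
Lemma avoids321_two_increasing (f : nat -> nat) n (c : nat -> bool) :
  (forall i j, i < j -> j < n -> c i = c j -> f i < f j) -> avoids321 (mkseq f n).
Proof.
move=> f_incr i j k ij jk; rewrite size_mkseq => kn.
have jn := ltn_trans jk kn; have in_ := ltn_trans ij jn.
rewrite !nth_mkseq //; apply/negP => /andP [fkj fji].
case cij: (c i == c j); first by have := f_incr i j ij jn (eqP cij); lia.
case cjk: (c j == c k); first by have := f_incr j k jk kn (eqP cjk); lia.
have cik : c i = c k by move: cij cjk; case: (c i); case: (c j); case: (c k).
by have := f_incr i k (ltn_trans ij jk) kn cik; lia.
Qed.

(* If every inversion k < l straddles the cut q (or ends in the value 0), then the
   entries 4 > 3 of an occurrence of 1243 or 2143 lie on both sides of the cut, so its
   two leading entries are left of the cut and below an entry right of it. *)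
Lemma avoids1243_2143_cut (f : nat -> nat) n q p0 :
  (forall k l, k < l -> l < n -> f l < f k -> k <= q < l \/ f l = 0) ->
  (forall a l, a <= q -> q < l -> l < n -> f a < f l -> a = p0) ->
  avoids1243_2143 (mkseq f n).
Proof.
move=> inv_cut left_below i j k l ij jk kl; rewrite size_mkseq => ln.
rewrite !nth_mkseq; try lia.
apply/negP => /and3P [fil fjl flk].
case: (inv_cut k l kl ln flk) => [/andP [kq ql] | fl0]; last by lia.
have := left_below i l ltac:(lia) ql ln fil; have := left_below j l ltac:(lia) ql ln fjl.
lia.
Qed.

(* In one-line notation on {0,..,m}, with top entry m and last entry z < m:
   shape0 m z   = (z+1) (z+2) ... (m-1) m 0 1 ... z,
   shape1 m z y k is obtained from shape0 m z by moving the entry y < z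
   to position k of the initial run (z+1) ... (m-1). *)
Definition shape0 m z := iota z.+1 (m - z.+1) ++ m :: iota 0 z.+1.

Definition shape1 m z y k :=
  iota z.+1 k ++ y :: iota (z.+1 + k) (m - z.+1 - k) ++ m :: iota 0 y ++ iota y.+1 (z - y).

Definition entry0 m z i :=
  if i < m - z.+1 then z.+1 + i else if i == m - z.+1 then m else i - (m - z).

Definition entry1 m z y k i :=
  if i < k then z.+1 + i
  else if i == k then y
  else if i < m - z then z + i
  else if i == m - z then m
  else if i - (m - z).+1 < y then i - (m - z).+1 else i - (m - z).

Lemma nth_iota_cat a n s i :
  nth 0 (iota a n ++ s) i = if i < n then a + i else nth 0 s (i - n).
Proof. by rewrite nth_cat size_iota; case: ifP => // ilt; rewrite nth_iota. Qed.

Lemma nth_cons0 (x : nat) s i : nth 0 (x :: s) i = if i == 0 then x else nth 0 s i.-1.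
Proof. by case: i. Qed.

Lemma nth_iota0 a n i : nth 0 (iota a n) i = if i < n then a + i else 0.
Proof. by rewrite -[iota a n]cats0 nth_iota_cat nth_nil. Qed.

Lemma shape0E m z : z < m -> shape0 m z = mkseq (entry0 m z) m.+1.
Proof.
move=> zm; apply: (@eq_from_nth _ 0) => [|i].
  by rewrite size_mkseq size_cat /= !size_iota; lia.
rewrite size_cat /= !size_iota => im; rewrite nth_mkseq; last lia.
by rewrite nth_iota_cat nth_cons0 nth_iota0 /entry0; case_ifs; lia.
Qed.

Lemma size_shape1 m z y k : y < z < m -> k <= m - z.+1 -> size (shape1 m z y k) = m.+1.
Proof. by move=> yzm km; rewrite /shape1 size_cat /= size_cat /= size_cat !size_iota; lia. Qed.

Lemma shape1E m z y k :
  y < z < m -> k <= m - z.+1 -> shape1 m z y k = mkseq (entry1 m z y k) m.+1.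
Proof.
move=> yzm km; apply: (@eq_from_nth _ 0) => [|i]; rewrite size_shape1 // ?size_mkseq // => im.
rewrite nth_mkseq // nth_iota_cat nth_cons0 nth_iota_cat nth_cons0 nth_iota_cat nth_iota0 /entry1.
case_ifs; lia.
Qed.

Definition max_not_last_avoider m s :=
  [&& perm_eq s (iota 0 m.+1), avoidsR14_seq s & nth 0 s m != m].

Lemma shape0_avoider m z : z < m -> max_not_last_avoider m (shape0 m z).
Proof.
move=> zm; rewrite shape0E //; apply/and3P; split.
- by apply: perm_eq_mkseq_iota => [i im | i j ij jm]; rewrite /entry0; case_ifs; lia.
- apply/avoidsR14_seqP; split.
    apply: (avoids321_two_increasing (c := fun i => i <= m - z.+1)) => i j ij jm /=.
    by rewrite /entry0; case_ifs; lia.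
  by apply: (avoids1243_2143_cut (q := m - z.+1) (p0 := 0)) => [k l kl lm | a l aq ql lm];
    rewrite /entry0; case_ifs; lia.
- by rewrite nth_mkseq // /entry0; case_ifs; lia.
Qed.

Lemma shape1_avoider m z y k : y < z < m -> k <= m - z.+1 -> (y == 0) || (k == 0) ->
  max_not_last_avoider m (shape1 m z y k).
Proof.
move=> /andP [yz zm] km y0_k0; rewrite shape1E ?yz //; apply/and3P; split.
- by apply: perm_eq_mkseq_iota => [i im | i j ij jm]; rewrite /entry1; case_ifs; lia.
- apply/avoidsR14_seqP; split.
    apply: (avoids321_two_increasing (c := fun i => if i == k then y != 0 else i <= m - z)).
    by move=> i j ij jm /=; case/orP: y0_k0 => /eqP y0_k0; subst; rewrite /entry1; case_ifs; lia.
  apply: (avoids1243_2143_cut (q := m - z) (p0 := k)) => [a l al lm | a l aq ql lm];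
    by case/orP: y0_k0 => /eqP y0_k0; subst; rewrite /entry1; case_ifs; lia.
- by rewrite nth_mkseq // /entry1; case_ifs; lia.
Qed.

Lemma nth_shape0_last m z : z < m -> nth 0 (shape0 m z) m = z.
Proof. by move=> zm; rewrite shape0E // nth_mkseq // /entry0; case_ifs; lia. Qed.

Lemma nth_shape1_last m z y k : y < z < m -> k <= m - z.+1 -> nth 0 (shape1 m z y k) m = z.
Proof. by move=> yzm km; rewrite shape1E // nth_mkseq // /entry1; case_ifs; lia. Qed.

Lemma shape1_inj m z y k y' k' :
  y < z < m -> k <= m - z.+1 -> y' < z < m -> k' <= m - z.+1 ->
  shape1 m z y k = shape1 m z y' k' -> y = y' /\ k = k'.
Proof.
move=> yzm km y'zm k'm; rewrite !shape1E // => e.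
have := congr1 (nth 0 ^~ k) e; have := congr1 (nth 0 ^~ k') e.
by rewrite !nth_mkseq /entry1; try lia; case_ifs; lia.
Qed.

Lemma shape0_neq_shape1 m z y k : y < z < m -> k <= m - z.+1 -> shape0 m z != shape1 m z y k.
Proof.
move=> yzm km; apply/eqP; rewrite shape0E ?shape1E //; try lia.
move/(congr1 (nth 0 ^~ (m - z.+1))); rewrite !nth_mkseq /entry0 /entry1; try lia.
by case_ifs; lia.
Qed.

(* A shape1 with a fixed last entry z is encoded by t in [1, m): t < z stands for y = t at
   the front, t >= z for y = 0 at position t - z (the subtraction truncates to 0 if t < z). *)
Definition shape1_code m z t := shape1 m z (if t < z then t else 0) (t - z).

Definition shapes m :=
  [seq shape0 m z | z <- iota 0 m] ++
  [seq shape1_code m z t | z <- iota 1 m.-1, t <- iota 1 m.-1].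

Lemma shape1_code_params m z t : 0 < z < m -> 0 < t < m ->
  [/\ (if t < z then t else 0) < z < m, t - z <= m - z.+1
     & ((if t < z then t else 0) == 0) || (t - z == 0)].
Proof. by move=> zm tm; case: ifP => tz; split; lia. Qed.

Lemma shape1_code_avoider m z t : 0 < z < m -> 0 < t < m ->
  max_not_last_avoider m (shape1_code m z t).
Proof. by move=> zm tm; have [yzm km yk] := shape1_code_params zm tm; apply: shape1_avoider. Qed.

Lemma shapes_avoiders m s : s \in shapes m -> max_not_last_avoider m s.
Proof.
rewrite mem_cat => /orP [/mapP [z] | /allpairsP [[z t] [/=]]].
  by rewrite mem_iota => zm ->; apply: shape0_avoider.
by rewrite !mem_iota => zm tm ->; apply: shape1_code_avoider; lia.
Qed.

Lemma size_shapes m : size (shapes m) = m + m.-1 * m.-1.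
Proof. by rewrite size_cat size_map size_allpairs !size_iota. Qed.

Lemma uniq_shapes m : uniq (shapes m).
Proof.
rewrite cat_uniq; apply/and3P; split.
- rewrite map_inj_in_uniq ?iota_uniq // => z z'; rewrite !mem_iota /= => zm z'm.
  by move/(congr1 (nth 0 ^~ m)); rewrite !nth_shape0_last.
- apply/hasPn => s /allpairsP [[z t] [/= + + ->]]; rewrite !mem_iota => zm tm.
  have {zm tm}[zm tm] : 0 < z < m /\ 0 < t < m by lia.
  apply/mapP => -[z' + e]; rewrite mem_iota => z'm.
  have [yzm km _] := shape1_code_params zm tm.
  have ez : z' = z.
    move/(congr1 (nth 0 ^~ m)): (e); rewrite /shape1_code nth_shape1_last //.
    by rewrite nth_shape0_last //; lia.
  by move/eqP: e; rewrite ez /shape1_code eq_sym (negbTE (shape0_neq_shape1 yzm km)).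
- apply: allpairs_uniq; rewrite ?iota_uniq // => -[z t] [z' t'].
  move=> /allpairsP [[z1 t1] [/= + + [-> ->]]] /allpairsP [[z2 t2] [/= + + [-> ->]]].
  rewrite !mem_iota /= => z1m t1m z2m t2m e.
  have {z1m t1m z2m t2m}[z1m t1m z2m t2m] : [/\ 0 < z1 < m, 0 < t1 < m, 0 < z2 < m & 0 < t2 < m].
    by split; lia.
  have [yzm1 km1 _] := shape1_code_params z1m t1m.
  have [yzm2 km2 _] := shape1_code_params z2m t2m.
  have ez : z1 = z2 by move/(congr1 (nth 0 ^~ m)): (e); rewrite /shape1_code !nth_shape1_last.
  subst z2; have [] := shape1_inj yzm1 km1 yzm2 km2 e.
  by do 2?case: ifP; move=> *; congr pair; lia.
Qed.

Module MaxNotLast.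
Section MaxNotLast.

Variables (m : nat) (s : seq nat).
Hypotheses (s_perm : perm_eq s (iota 0 m.+1)) (s321 : avoids321 s)
  (s1243_2143 : avoids1243_2143 s) (last_neq_max : nth 0 s m != m).

Lemma size_s : size s = m.+1.
Proof. by rewrite (perm_size s_perm) size_iota. Qed.

Lemma uniq_s : uniq s.
Proof. by rewrite (perm_uniq s_perm) iota_uniq. Qed.

Lemma mem_s v : (v \in s) = (v <= m).
Proof. by rewrite (perm_mem s_perm) mem_iota. Qed.

Lemma nth_s_le i : i <= m -> nth 0 s i <= m.
Proof. by move=> im; rewrite -mem_s mem_nth // size_s. Qed.

Lemma nth_s_neq i j : i <= m -> j <= m -> i != j -> nth 0 s i != nth 0 s j.
Proof. by move=> im jm; rewrite nth_uniq ?size_s ?uniq_s. Qed.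

Let p := index m s.
Let z := nth 0 s m.

Lemma nth_max : nth 0 s p = m.
Proof. by rewrite nth_index // mem_s. Qed.

Lemma max_pos : p < m.
Proof.
have : p <= m by rewrite -ltnS -size_s index_mem mem_s.
rewrite leq_eqVlt => /predU1P [pm | //].
by move: last_neq_max; rewrite -[X in nth 0 s X]pm nth_max eqxx.
Qed.

Lemma last_lt_max : z < m.
Proof. by have := nth_s_le (leqnn m); move: last_neq_max; rewrite -/z; lia. Qed.

Lemma after_max_incr i j : p < i -> i < j -> j <= m -> nth 0 s i < nth 0 s j.
Proof.
move=> pi ij jm; have pm := max_pos; have im : i <= m by lia.
have := s321 pi ij; rewrite size_s nth_max => /(_ jm).
have := nth_s_le im; have := nth_s_neq im jm ltac:(lia).
have := nth_s_neq im (ltnW pm) ltac:(lia); rewrite nth_max; lia.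
Qed.

Lemma after_max_le_last i : p < i -> i <= m -> nth 0 s i <= z.
Proof.
move=> pi; rewrite leq_eqVlt => /predU1P [-> // | im].
exact/ltnW/after_max_incr.
Qed.

Lemma before_max_low_unique i j : i < j -> j < p -> ~~ ((nth 0 s i < z) && (nth 0 s j < z)).
Proof.
move=> ij jp; have pm := max_pos; have := last_lt_max.
have := s1243_2143 ij jp pm; rewrite size_s nth_max -/z => /(_ (ltnSn m)); lia.
Qed.

Lemma before_max_high_incr i j :
  i < j -> j < p -> z < nth 0 s i -> z < nth 0 s j -> nth 0 s i < nth 0 s j.
Proof.
move=> ij jp; have pm := max_pos; have jm : j <= m by lia.
have := s321 ij (ltn_trans jp pm); rewrite size_s -/z => /(_ (ltnSn m)).
have := nth_s_neq (ltnW (leq_trans ij jm)) jm ltac:(lia); lia.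
Qed.

(* The value 0 can neither lie before the top (two entries below z there) nor after it
   (a 321 ending in 0). *)
Lemma before_max_high_low_zero i j :
  i < j -> j < p -> z < nth 0 s i -> nth 0 s j < z -> nth 0 s j = 0.
Proof.
move=> ij jp zi jz; have pm := max_pos; case: (posnP (nth 0 s j)) => // j_gt0.
pose q := index 0 s.
have qm : q <= m by rewrite -ltnS -size_s index_mem mem_s.
have sq : nth 0 s q = 0 by rewrite nth_index // mem_s.
have qp : q != p by apply/eqP => qp; move: sq; rewrite qp nth_max; have := last_lt_max; lia.
have qj : q != j by apply/eqP => qj; move: sq; rewrite qj; lia.
have [qp' | pq] : q < p \/ p < q by lia.
  have [qj' | jq] : q < j \/ j < q by lia.
    by have := before_max_low_unique qj' jp; rewrite sq; lia.
  by have := before_max_low_unique jq qp'; rewrite sq; lia.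
by have := s321 ij (ltn_trans jp pq); rewrite size_s ltnS sq => /(_ qm); lia.
Qed.

Let B := take p s.
Let S := drop p.+1 s.

Lemma split_at_max : s = B ++ m :: S.
Proof.
rewrite /B /S -{1}(cat_take_drop p s) (drop_nth 0) ?nth_max //.
by rewrite size_s ltnS ltnW // max_pos.
Qed.

Lemma size_B : size B = p.
Proof. by rewrite size_takel // size_s ltnW // ltnS ltnW // max_pos. Qed.

Lemma size_S : size S = m - p.
Proof. by rewrite size_drop size_s. Qed.

Lemma nth_B i : i < p -> nth 0 B i = nth 0 s i.
Proof. by move=> ip; rewrite nth_take. Qed.

Lemma nth_S i : nth 0 S i = nth 0 s (p.+1 + i).
Proof. exact: nth_drop. Qed.

Lemma sorted_S : sorted ltn S.
Proof.
rewrite sorted_pairwise; last exact: ltn_trans.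
apply/(pairwiseP 0) => i j; rewrite !inE size_S => im jm ij; rewrite !nth_S.
by apply: after_max_incr; lia.
Qed.

Lemma mem_S_le v : v \in S -> v <= z.
Proof.
case/(nthP 0) => i; rewrite size_S nth_S => im <-.
by apply: after_max_le_last; lia.
Qed.

Lemma last_in_S : z \in S.
Proof.
have pm := max_pos; apply/(nthP 0); exists (m - p.+1); first by rewrite size_S; lia.
by rewrite nth_S; congr nth; lia.
Qed.

Lemma mem_B v : v \in B -> v < m /\ v != z.
Proof.
move: uniq_s; rewrite split_at_max cat_uniq => /and3P [_ /hasPn BS _] vB.
have vS : v \notin m :: S by apply: contraL vB => /BS.
have : v <= m by rewrite -mem_s split_at_max mem_cat vB.
move: vS; rewrite inE negb_or => /andP [/eqP vm vS] v_le; split; first by lia.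
by apply: contraNneq vS => ->; apply: last_in_S.
Qed.

Lemma mem_B_or_S v : v < m -> (v \in B) || (v \in S).
Proof.
move=> vm; have : v \in s by rewrite mem_s ltnW.
by rewrite split_at_max mem_cat inE (ltn_eqF vm).
Qed.

Lemma high_B : [seq v <- B | z < v] = iota z.+1 (m - z.+1).
Proof.
apply: (irr_sorted_eq ltn_trans ltnn _ (iota_ltn_sorted _ _)).
  have B_high : pairwise (fun a b => (z < a) ==> (z < b) ==> (a < b)) B.
    apply/(pairwiseP 0) => i j; rewrite !inE size_B => ip jp ij; rewrite !nth_B //.
    by apply/implyP => zi; apply/implyP; apply: before_max_high_incr.
  rewrite sorted_pairwise; last exact: ltn_trans.
  apply: (sub_in_pairwise (P := fun v => z < v)) (pairwise_filter _ B_high).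
    by move=> a b za zb /implyP /(_ za) /implyP /(_ zb).
  by apply/allP => v; rewrite mem_filter => /andP [].
move=> v; rewrite mem_filter mem_iota; apply/andP/idP => [[zv /mem_B [vm _]] | vz]; first lia.
have vm : v < m by lia.
split; first lia.
by have /orP [// | /mem_S_le] := mem_B_or_S vm; lia.
Qed.

Lemma S_eq T : sorted ltn T -> (forall v, (v \in T) = (v <= z) && (v \notin B)) -> S = T.
Proof.
move=> T_sorted memT; apply: (irr_sorted_eq ltn_trans ltnn sorted_S T_sorted) => v.
rewrite memT; apply/idP/andP => [vS | [vz vB]].
  split; first exact: mem_S_le.
  move: uniq_s; rewrite split_at_max cat_uniq => /and3P [_ /hasPn /(_ v) + _].
  by rewrite inE vS orbT => /(_ isT).
by have := mem_B_or_S (leq_ltn_trans vz last_lt_max); rewrite (negbTE vB).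
Qed.

Lemma low_B_unique y y' : y \in B -> y' \in B -> y < z -> y' < z -> y = y'.
Proof.
case/(nthP 0) => i; rewrite size_B => ip <-; case/(nthP 0) => j; rewrite size_B => jp <-.
rewrite !nth_B // => iz jz; case: (ltngtP i j) => [ij | ji | -> //].
  by have := before_max_low_unique ij jp; rewrite iz jz.
by have := before_max_low_unique ji ip; rewrite iz jz.
Qed.

Lemma low_B_zero_or_first y : y \in B -> y < z -> (y == 0) || (index y B == 0).
Proof.
move=> yB yz; case: (posnP (index y B)) => [| k_gt0]; first by rewrite orbT.
have kp : index y B < p by rewrite -size_B index_mem.
have p_gt0 : 0 < p by lia.
have sk : nth 0 s (index y B) = y by rewrite -nth_B // nth_index.
have s0 : z < nth 0 s 0.
  have B0 : nth 0 B 0 \in B by rewrite mem_nth // size_B.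
  have [_] := mem_B B0; rewrite nth_B // => s0z.
  by have := before_max_low_unique k_gt0 kp; rewrite sk yz andbT; lia.
by rewrite -sk (before_max_high_low_zero k_gt0 kp s0) ?sk.
Qed.

Lemma uniq_B : uniq B.
Proof. by move: uniq_s; rewrite split_at_max cat_uniq => /andP []. Qed.

Lemma shape_without_low : all (fun v => z < v) B -> s = shape0 m z.
Proof.
move=> /allP B_high; rewrite split_at_max /shape0 -high_B (all_filterP (introT allP B_high)).
congr cat; congr cons; apply: S_eq; first exact: iota_ltn_sorted.
move=> v; rewrite mem_iota /= ltnS; case vB: (v \in B) => /=; last by rewrite andbT.
by have := B_high v vB; lia.
Qed.

Lemma sorted_iota_skip y n : sorted ltn (iota 0 y ++ iota y.+1 n).
Proof.
rewrite sorted_pairwise; last exact: ltn_trans.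
rewrite pairwise_cat -!sorted_pairwise ?iota_ltn_sorted ?andbT; try exact: ltn_trans.
by apply/allrelP => a b; rewrite !mem_iota; lia.
Qed.

Lemma high_B_but_low y : y \in B -> y < z -> {in B, forall v, (z < v) = (v != y)}.
Proof.
move=> yB yz v vB; have [_ vz] := mem_B vB; apply/idP/idP => [zv | vy].
  by apply: contraTneq zv => ->; lia.
by rewrite ltn_neqAle eq_sym vz leqNgt; apply: contra vy => /(low_B_unique vB yB)->.
Qed.

Lemma S_without_low y : y \in B -> y < z -> S = iota 0 y ++ iota y.+1 (z - y).
Proof.
move=> yB yz; apply: S_eq => [|v]; first exact: sorted_iota_skip.
rewrite mem_cat !mem_iota /=; case vB: (v \in B) => /=.
  have [_ /eqP vz] := mem_B vB; have := high_B_but_low yB yz vB.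
  by rewrite andbF; case: eqP => [-> | ]; lia.
rewrite andbT; case: (eqVneq v y) => [vy | vy]; first by rewrite vy yB in vB.
lia.
Qed.

Lemma shape_with_low y : y \in B -> y < z ->
  [/\ index y B <= m - z.+1, (y == 0) || (index y B == 0) & s = shape1 m z y (index y B)].
Proof.
move=> yB yz; set k := index y B; have kp : k < p by rewrite -size_B index_mem.
have rem_y : rem y B = iota z.+1 (m - z.+1).
  by rewrite -high_B rem_filter ?uniq_B //; apply: eq_in_filter => v /(high_B_but_low yB yz) ->.
have size_take_k : size (take k B) = k by rewrite size_takel // size_B ltnW.
have km : k <= m - z.+1.
  by have := congr1 size rem_y; rewrite remE size_cat size_take_k size_iota; lia.
have take_k : take k B = iota z.+1 k.
  by rewrite -(take_size_cat (drop k.+1 B) size_take_k) -remE rem_y take_iota; congr iota; lia.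
have drop_k : drop k.+1 B = iota (z.+1 + k) (m - z.+1 - k).
  by rewrite -(drop_size_cat (drop k.+1 B) size_take_k) -remE rem_y drop_iota.
split => //; first exact: low_B_zero_or_first.
have B_split : B = take k B ++ y :: drop k.+1 B.
  by rewrite -{1}(cat_take_drop k B) (drop_nth 0) ?nth_index // size_B.
by rewrite split_at_max /shape1 -take_k -drop_k -(S_without_low yB yz) {1}B_split -catA.
Qed.

Lemma max_not_last_in_shapes : s \in shapes m.
Proof.
have zm := last_lt_max; rewrite mem_cat.
case: (boolP (all (fun v => z < v) B)) => [/shape_without_low -> | /allPn [y yB]].
  by rewrite map_f // mem_iota.
have [_ yz] := mem_B yB; rewrite -leqNgt leq_eqVlt (negbTE yz) /= => {}yz.
have [km yk ->] := shape_with_low yB yz; apply/orP; right; apply/allpairsP.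
exists (z, if y == 0 then z + index y B else y); rewrite /= !mem_iota /shape1_code.
case: (eqVneq y 0) yk => [y0 _ | y_neq0 /= /eqP k0].
  rewrite y0 in km *; split; try lia.
  by rewrite addKn; congr shape1; case: ifP; lia.
rewrite k0 in km *; split; try lia.
by rewrite yz; congr shape1; lia.
Qed.

End MaxNotLast.
End MaxNotLast.

Lemma count_max_not_last m :
  count (fun s => avoidsR14_seq s && (nth 0 s m != m)) (permutations (iota 0 m.+1))
  = m + m.-1 * m.-1.
Proof.
rewrite -size_shapes -size_filter; apply/perm_size/uniq_perm.
- exact/filter_uniq/permutations_uniq.
- exact: uniq_shapes.
move=> s; rewrite mem_filter mem_permutations andbC.
apply/idP/idP => [| /shapes_avoiders //].
case/and3P => s_perm /avoidsR14_seqP [s321 s1243_2143] last_neq.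
exact: MaxNotLast.max_not_last_in_shapes.
Qed.

Lemma card_Av_R14_succ m : #|Av m.+1 R14| = #|Av m R14| + (m + m.-1 * m.-1).
Proof.
rewrite !card_Av_R14 -(count_avoiders_max_last m) -count_max_not_last.
rewrite -[LHS]size_filter -(count_predC (fun s => nth 0 s m == m)).
by rewrite !count_filter; congr addn; apply: eq_count => s; rewrite /= andbC.
Qed.

Lemma card_Av_R14_0 : #|Av 0 R14| = 1.
Proof.
rewrite card_Av_R14 (_ : permutations (iota 0 0) = [:: [::]]) //= addn0.
apply/eqP; rewrite eqb1.
by apply/avoidsR14_seqP; split => [i j k | i j k l] _ _ //; rewrite ltn0.
Qed.

Lemma card_Av_R14_closed n :
  #|Av n.+1 R14| = 'C(n, 0) + 'C(n, 1) + 2 * 'C(n, 2) + 2 * 'C(n, 3).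
Proof.
have bin2_sq k : 2 * 'C(k, 2) + k = k * k by elim: k => // k IHk; rewrite binS bin1; lia.
elim: n => [|n IHn]; first by rewrite card_Av_R14_succ card_Av_R14_0.
rewrite card_Av_R14_succ IHn !binS !bin0 !bin1 /=; have := bin2_sq n; lia.
Qed.

(* The N-th coefficient of (1 - X)^4 times the series is the fourth difference of a at N,
   which vanishes for N >= 5 since a (n + 1) - a n is quadratic in n. *)
Lemma coef_gf_of_recurrence (a : nat -> nat) :
  a 0 = 1 -> (forall m, a m.+1 = a m + (m + m.-1 * m.-1)) ->
  forall N : nat,
    (((1 - 'X) ^+ 4 * \sum_(k < N.+1) ((a k)%:R : int) *: 'X^k)`_N
     = ((1 - 'X) ^+ 4 + 'X * (1 - 2%:R *: 'X + 3%:R *: 'X^2) : {poly int})`_N)%R.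
Proof.
move=> a0 aS N.
have -> : (\sum_(k < N.+1) ((a k)%:R : int) *: 'X^k = \poly_(k < N.+1) ((a k)%:R : int))%R.
  by rewrite poly_def.
have -> : ((1 - 'X) ^+ 4 + 'X * (1 - 2%:R *: 'X + 3%:R *: 'X^2) : {poly int})%R
          = (1 - 'X^1 *+ 3 + 'X^2 *+ 4 - 'X^3 + 'X^4)%R by rewrite !scaler_nat; ring.
have -> : ((1 - 'X) ^+ 4 : {poly int})%R = (1 - 'X^1 *+ 4 + 'X^2 *+ 6 - 'X^3 *+ 4 + 'X^4)%R.
  by ring.
rewrite !mulrDl !mulNr mul1r !mulrnAl !coefD !coefN !coefMn !coefXnM coef1 !coefXn !coef_poly.
have a1 : a 1 = 1 by rewrite aS a0.
have a2 : a 2 = 2 by rewrite aS a1.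
have a3 : a 3 = 5 by rewrite aS a2.
have a4 : a 4 = 12 by rewrite aS a3.
case: N => [|[|[|[|[|M]]]]]; rewrite ?subSS ?subn0 ?a0 ?a1 ?a2 ?a3 ?a4 /=; try lia.
by rewrite !ifT ?aS /=; lia.
Qed.

Theorem mainTheorem14 :
  (forall N : nat,
     (((1 - 'X) ^+ 4 *
        \sum_(k < N.+1) (#|Av k R14|%:R : int) *: 'X^k)`_N
      = ((1 - 'X) ^+ 4 + 'X * (1 - 2%:R *: 'X + 3%:R *: 'X^2) : {poly int})`_N)%R)
  /\
  (forall n : nat, (1 <= n)%N ->
     #|Av n R14|
     = 'C(n.-1, 0) + 'C(n.-1, 1) + 2 * 'C(n.-1, 2) + 2 * 'C(n.-1, 3)).
Proof.
split; first exact: (coef_gf_of_recurrence (a := fun k => #|Av k R14|))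
                      card_Av_R14_0 card_Av_R14_succ.
by case=> [// | n] _; apply: card_Av_R14_closed.
Qed.
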